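(* Let $a,b\in\mathbb{R}$ with $0<a<b$, let $p,q>1$ with $\frac1p+\frac1q=1$, $s\in\left(0,\frac1q\right)$, and $\alpha,\lambda\in[0,1]$. Define $$C_s(\alpha,q)=(1-\alpha)\big[A_\alpha^{sq}(a,b)+a^{sq}\big],\qquad D_s(\alpha,q)=\alpha\big[A_\alpha^{sq}(a,b)+b^{sq}\big],$$ $$\varepsilon_1(\alpha,\lambda,p)=(\alpha\lambda)^{p+1}+(1-\alpha-\alpha\lambda)^{p+1},\qquad \varepsilon_2(\alpha,\lambda,p)=(\alpha\lambda)^{p+1}-(\alpha\lambda-1+\alpha)^{p+1}.$$ Then $$\left|\lambda A_\alpha(a^{s+1},b^{s+1})+(1-\lambda)A_\alpha^{s+1}(a,b)-L_{s+1}^{s+1}(a,b)\right|\leq (b-a)\left(\frac{1}{p+1}\right)^{1/p}(s+1)^{1-\frac1q}\cdot K,$$ where $K=\varepsilon_1^{1/p}(\alpha,\lambda,p)C_s^{1/q}(\alpha,q)+\varepsilon_1^{1/p}(1-\alpha,\lambda,p)D_s^{1/q}(\alpha,q)$ if $\alpha\lambda\leq 1-\alpha\leq 1-\lambda(1-\alpha)$; $K=\varepsilon_1^{1/p}(\alpha,\lambda,p)C_s^{1/q}(\alpha,q)+\varepsilon_2^{1/p}(1-\alpha,\lambda,p)D_s^{1/q}(\alpha,q)$ if $\alpha\lambda\leq 1-\lambda(1-\alpha)\leq 1-\alpha$; $K=\varepsilon_2^{1/p}(\alpha,\lambda,p)C_s^{1/q}(\alpha,q)+\varepsilon_1^{1/p}(1-\alpha,\lambda,p)D_s^{1/q}(\alpha,q)$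 if $1-\alpha\leq\alpha\lambda\leq 1-\lambda(1-\alpha)$.
   Context: For real $x,y$ and $\alpha\in[0,1]$, the weighted arithmetic mean is $A_\alpha(x,y)=\alpha x+(1-\alpha)y$, and $A_\alpha^{r}(x,y)$ denotes $(A_\alpha(x,y))^{r}$. For $x,y>0$, $x\neq y$, and $p\in\mathbb{R}\setminus\{-1,0\}$, the $p$-logarithmic mean is $L_p(x,y)=\left(\frac{y^{p+1}-x^{p+1}}{(p+1)(y-x)}\right)^{1/p}$, and $L_{s+1}^{s+1}$ denotes its $(s+1)$-th power. *)

From mathcomp Require Import all_boot all_order all_algebra.
From mathcomp Require Import all_classical all_reals all_analysis.
Set Implicit Arguments. Unset Strict Implicit. Unset Printing Implicit Defensive.
Import Order.TTheory GRing.Theory Num.Theory.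
Local Open Scope ring_scope.

Section Defs.
Variable R : realType.

Definition Amean (alpha x y : R) : R := alpha * x + (1 - alpha) * y.

Definition Lmean (p x y : R) : R :=
  ((y `^ (p + 1) - x `^ (p + 1)) / ((p + 1) * (y - x))) `^ (p^-1).

Definition Cs (a b s alpha q : R) : R :=
  (1 - alpha) * ((Amean alpha a b) `^ (s * q) + a `^ (s * q)).
Definition Ds (a b s alpha q : R) : R :=
  alpha * ((Amean alpha a b) `^ (s * q) + b `^ (s * q)).

Definition eps1 (alpha lambda p : R) : R :=
  (alpha * lambda) `^ (p + 1) + (1 - alpha - alpha * lambda) `^ (p + 1).
Definition eps2 (alpha lambda p : R) : R :=
  (alpha * lambda) `^ (p + 1) - (alpha * lambda - 1 + alpha) `^ (p + 1).

End Defs.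

(* Put h = b - a, u t = a + h t and f x = x ^ (s + 1).  Integrating by parts
   against the Peano kernel K t = t - alpha lambda on [0, 1 - alpha] and
   K t = t - (1 - lambda (1 - alpha)) on [1 - alpha, 1] writes the quantity
   inside the absolute value as h times the integral of K t * f' (u t) over
   [0, 1].  On each of the two pieces Hoelder's inequality separates
   int |K|^p, computed exactly (it is eps1 or eps2 over p + 1 according to
   whether the node of K lies inside the piece or outside it), from
   int |f' (u t)|^q = (s + 1)^q int u^(s q).  As s q <= 1, the elementary
   bound U^(r+1) - V^(r+1) <= (U - V) (U^r + V^r) for r <= 1 controls the
   latter by (s + 1)^(q - 1) times the length of the piece times the sum of
   the values of u^(s q) at its ends, which are the terms of C_s and D_s. *)

From mathcomp Require Import all_boot all_order all_algebra.
From mathcomp Require Import all_classical all_reals all_analysis.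
From mathcomp Require Import ring lra.
Import Order.TTheory GRing.Theory Num.Theory.
Import numFieldNormedType.Exports.
Local Open Scope classical_set_scope.
Local Open Scope ring_scope.

Section PowerIntegrals.
Context {R : realType}.
Notation mu := (@lebesgue_measure R).

Lemma continuous_powR_norm (e : R) : 0 < e -> continuous (fun t : R => `|t| `^ e).
Proof.
move=> e0 x; have [->|x0] := eqVneq x 0.
  apply/cvgrPdist_lt => eps eps0.
  have eps_root : eps = (eps `^ e^-1) `^ e.
    by rewrite -powRrM mulVf ?gt_eqF// powRr1// ltW.
  near=> t; rewrite normr0 powR0 ?gt_eqF// sub0r normrN ger0_norm ?powR_ge0//.
  rewrite eps_root; apply: gt0_ltr_powR; rewrite ?inE ?nnegrE ?powR_ge0//.
  by near: t; exact: (@nbhs0_lt _ R^o _ (powR_gt0 e^-1 eps0)).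
apply: (@continuous_comp _ _ _ (@Num.norm _ R) ((@powR R)^~ e)).
  exact: norm_continuous.
apply/differentiable_continuous/derivable1_diffP/derivable_powR.
by rewrite in_itv /= andbT normr_gt0.
Unshelve. all: end_near. Qed.

Lemma continuous_powR_dist (c e : R) : 0 < e ->
  continuous (fun t : R => `|t - c| `^ e).
Proof.
move=> e0 x; apply: (@continuous_comp _ _ _ (fun t => t - c) (fun y => `|y| `^ e)).
  by apply: cvgB; [exact: cvg_id | exact: cvg_cst].
exact: continuous_powR_norm.
Qed.

Lemma is_derive_powR_dist_gt (c k : R) {t : R} : c < t ->
  is_derive t 1 (fun x => `|x - c| `^ k) (k * (t - c) `^ (k - 1)).
Proof.
move=> ct; apply: (@near_eq_is_derive _ _ _ (fun x => (x - c) `^ k)).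
  near=> x; rewrite ger0_norm // subr_ge0 ltW //; near: x; exact: lt_nbhsr.
have dpow : is_derive (t - c) 1 ((@powR R)^~ k) (k * (t - c) `^ (k - 1)).
  by apply: is_derive1_powR; rewrite subr_gt0.
have dsub : is_derive t 1 (fun x => x - c) (1 - 0) by exact: is_deriveB.
by have := @is_derive1_comp R _ (fun x => x - c) t _ _ dpow dsub; rewrite subr0 mulr1.
Unshelve. all: end_near. Qed.

Lemma is_derive_powR_dist_lt (c k : R) {t : R} : t < c ->
  is_derive t 1 (fun x => `|x - c| `^ k) (- (k * (c - t) `^ (k - 1))).
Proof.
move=> tc; apply: (@near_eq_is_derive _ _ _ (fun x => (c - x) `^ k)).
  near=> x; rewrite distrC ger0_norm // subr_ge0 ltW //; near: x; exact: lt_nbhsl.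
have dpow : is_derive (c - t) 1 ((@powR R)^~ k) (k * (c - t) `^ (k - 1)).
  by apply: is_derive1_powR; rewrite subr_gt0.
have dsub : is_derive t 1 (fun x => c - x) (0 - 1) by exact: is_deriveB.
by have := @is_derive1_comp R _ (fun x => c - x) t _ _ dpow dsub; rewrite sub0r mulrN1.
Unshelve. all: end_near. Qed.

Lemma Rintegral_FTC (f F : R -> R) (x0 x1 : R) : x0 <= x1 ->
  {in `[x0, x1], continuous f} ->
  (forall t, x0 < t < x1 -> is_derive t 1 F (f t)) ->
  {for x0, continuous F} -> {for x1, continuous F} ->
  \int[mu]_(t in `[x0, x1]) f t = F x1 - F x0.
Proof.
rewrite le_eqVlt => /predU1P[<- _ _ _ _|x01 cf dF cF0 cF1].
  by rewrite set_itv1 Rintegral_set1 subrr.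
rewrite /Rintegral (@continuous_FTC2 _ f F _ _ x01) //=.
- by apply: continuous_in_subspaceT => t; rewrite inE /= => /cf.
- split; [by move=> t; rewrite in_itv /= => /dF [] | exact: cvg_at_right_filter
         | exact: cvg_at_left_filter].
- by move=> t; rewrite in_itv /= => /dF dFt; rewrite derive1E derive_val.
Qed.

Lemma Rintegral_powR_dist_ge (c e x0 x1 : R) : 0 < e -> c <= x0 -> x0 <= x1 ->
  \int[mu]_(t in `[x0, x1]) `|t - c| `^ e =
  ((x1 - c) `^ (e + 1) - (x0 - c) `^ (e + 1)) / (e + 1).
Proof.
move=> e0 cx0 x01; have e1_gt0 : 0 < e + 1 by rewrite addr_gt0.
pose F t := (e + 1)^-1 * `|t - c| `^ (e + 1).
have cF t : {for t, continuous F}.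
  by apply: continuousM; [exact: cvg_cst | exact: continuous_powR_dist].
transitivity (F x1 - F x0).
  apply: Rintegral_FTC => // [t _|t /andP[x0t _]]; first exact: continuous_powR_dist.
  have ct : c < t by exact: le_lt_trans x0t.
  have := is_deriveZ (e + 1)^-1 (is_derive_powR_dist_gt c (e + 1) ct).
  rewrite /GRing.scale /= mulrA mulVf ?gt_eqF // mul1r addrK.
  by rewrite ger0_norm // subr_ge0 ltW.
by rewrite /F !ger0_norm ?subr_ge0 -?mulrBr ?[_^-1 * _]mulrC //; exact: le_trans x01.
Qed.

Lemma Rintegral_powR_dist_le (c e x0 x1 : R) : 0 < e -> x1 <= c -> x0 <= x1 ->
  \int[mu]_(t in `[x0, x1]) `|t - c| `^ e =
  ((c - x0) `^ (e + 1) - (c - x1) `^ (e + 1)) / (e + 1).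
Proof.
move=> e0 x1c x01; have e1_gt0 : 0 < e + 1 by rewrite addr_gt0.
pose F t := - (e + 1)^-1 * `|t - c| `^ (e + 1).
have cF t : {for t, continuous F}.
  by apply: continuousM; [exact: cvg_cst | exact: continuous_powR_dist].
transitivity (F x1 - F x0).
  apply: Rintegral_FTC => // [t _|t /andP[_ tx1]]; first exact: continuous_powR_dist.
  have tc : t < c by exact: lt_le_trans x1c.
  have := is_deriveZ (- (e + 1)^-1) (is_derive_powR_dist_lt c (e + 1) tc).
  rewrite /GRing.scale /= mulrNN mulrA mulVf ?gt_eqF // mul1r addrK.
  by rewrite distrC ger0_norm // subr_ge0 ltW.
rewrite /F ![`|_ - c|]distrC !ger0_norm ?subr_ge0 //; last exact: le_trans x1c.
ring.
Qed.

Lemma Rintegral_powR_dist_mid (c e x0 x1 : R) : 0 < e -> x0 <= c -> c <= x1 ->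
  \int[mu]_(t in `[x0, x1]) `|t - c| `^ e =
  ((c - x0) `^ (e + 1) + (x1 - c) `^ (e + 1)) / (e + 1).
Proof.
move=> e0 x0c cx1.
have int01 : mu.-integrable `[x0, x1] (EFin \o (fun t => `|t - c| `^ e)).
  apply: continuous_compact_integrable; first exact: segment_compact.
  by apply: continuous_subspaceT; exact: continuous_powR_dist.
have := @Rintegral_itvB R (fun t => `|t - c| `^ e) (BLeft x0) (BRight x1) c int01.
rewrite !bnd_simp => /(_ x0c cx1) /eqP; rewrite subr_eq => /eqP ->.
rewrite Rintegral_itv_obnd_cbnd; last first.
  by apply: integrableS int01 => //; apply: subset_itvr; rewrite bnd_simp.
rewrite (Rintegral_powR_dist_le _ _ _ _ e0 (lexx c) x0c).
rewrite (Rintegral_powR_dist_ge _ _ _ _ e0 (lexx c) cx1).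
rewrite subrr powR0 ?gt_eqF ?addr_gt0 //; ring.
Qed.

End PowerIntegrals.

Section Hoelder.
Context {R : realType}.
Notation mu := (@lebesgue_measure R).

Lemma continuous_itv_integrable {x0 x1 : R} {f : R -> R} :
  {within `[x0, x1], continuous f} -> mu.-integrable `[x0, x1] (EFin \o f).
Proof. by apply: continuous_compact_integrable; exact: segment_compact. Qed.

Lemma continuous_itv_Rintegral {x0 x1 : R} {f : R -> R} :
  {within `[x0, x1], continuous f} ->
  (\int[mu]_(t in `[x0, x1]) (f t)%:E)%E = (\int[mu]_(t in `[x0, x1]) f t)%:E.
Proof.
move=> cf; rewrite fineK //; apply: integrable_fin_num => //.
exact: continuous_itv_integrable.
Qed.

Lemma continuous_within_powR_norm {D : set R} {f : R -> R} {e : R} : 0 < e ->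
  {within D, continuous f} -> {within D, continuous (fun t => `|f t| `^ e)}.
Proof.
move=> e0 cf x.
by have := @continuous_comp (subspace D) R R f (fun y => `|y| `^ e) x (cf x)
               (continuous_powR_norm e e0 (f x)).
Qed.

(* The library's Hoelder inequality, applied to f and g patched by 0 outside
   [x0, x1]. *)
Lemma hoelder_Rintegral_itv {x0 x1 : R} {f g : R -> R} {p q : R} :
  {within `[x0, x1], continuous f} -> {within `[x0, x1], continuous g} ->
  0 < p -> 0 < q -> p^-1 + q^-1 = 1 ->
  `| \int[mu]_(t in `[x0, x1]) (f t * g t) | <=
   (\int[mu]_(t in `[x0, x1]) `|f t| `^ p) `^ p^-1 *
   (\int[mu]_(t in `[x0, x1]) `|g t| `^ q) `^ q^-1.
Proof.
move=> cf cg p0 q0 pq.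
have cfg : {within `[x0, x1], continuous (fun t => f t * g t)}.
  by move=> x; apply: continuousM; [exact: cf | exact: cg].
have itv_meas : measurable (`[x0, x1] : set R) by [].
apply: le_trans (@le_normr_Rintegral _ _ _ mu _ _ itv_meas
                   (continuous_itv_integrable cfg)) _.
rewrite -lee_fin -continuous_itv_Rintegral; last first.
  by move=> x; have := @continuous_comp (subspace `[x0, x1]) R R _ (@Num.norm _ R) x
                         (cfg x) (@norm_continuous _ R _).
have patch_meas (k : R -> R) : {within `[x0, x1], continuous k} ->
    measurable_fun setT (k \_ `[x0, x1]).
  move=> ck; apply/(measurable_restrictT _ _).1 => //.
  exact: measurable_realfun.subspace_continuous_measurable_fun.
have := hoelder mu (patch_meas _ cf) (patch_meas _ cg) p0 q0 pq.
rewrite Lnorm1 !Lnorm.unlock /=.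
have patch_norm1 : (\int[mu]_x (`|(f \_ `[x0, x1]) x * (g \_ `[x0, x1]) x|)%:E)%E =
    (\int[mu]_(t in `[x0, x1]) (`|f t * g t|)%:E)%E.
  rewrite [RHS]integral_mkcond; apply: eq_integral => x _.
  by rewrite /patch /=; case: ifP => _ //; rewrite mul0r normr0.
have patch_normp (k : R -> R) (e : R) : e != 0 ->
    (\int[mu]_x (`|(k \_ `[x0, x1]) x| `^ e)%:E)%E =
    (\int[mu]_(t in `[x0, x1]) (`|k t| `^ e)%:E)%E.
  move=> e_neq0; rewrite [RHS]integral_mkcond; apply: eq_integral => x _.
  by rewrite /patch /=; case: ifP => _ //; rewrite normr0 powR0.
rewrite patch_norm1 (patch_normp f p) ?gt_eqF // (patch_normp g q) ?gt_eqF //.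
rewrite (continuous_itv_Rintegral (continuous_within_powR_norm p0 cf)).
rewrite (continuous_itv_Rintegral (continuous_within_powR_norm q0 cg)).
by rewrite !poweR_EFin -EFinM.
Qed.

End Hoelder.

Section PowerFacts.
Context {R : realType}.

Lemma powRS (x r : R) : 0 < x -> x `^ (r + 1) = x * x `^ r.
Proof.
move=> x0; rewrite powRD; last by apply/implyP => _; rewrite gt_eqF.
by rewrite powRr1 ?ltW // mulrC.
Qed.

Lemma powRS_sub_le (U V r : R) : 0 < V -> V <= U -> r <= 1 ->
  U `^ (r + 1) - V `^ (r + 1) <= (U - V) * (V `^ r + U `^ r).
Proof.
move=> V0 VU r1; have U0 : 0 < U := lt_le_trans V0 VU.
have split_one W : 0 < W -> W = W `^ (1 - r) * W `^ r.
  by move=> W0; rewrite -powRD ?subrK ?powRr1 ?ltW ?oner_eq0.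
have cross : V * U `^ r <= U * V `^ r.
  rewrite {1}(split_one V V0) {2}(split_one U U0).
  rewrite -[_ * _ * U `^ r]mulrA -[_ * _ * V `^ r]mulrA [U `^ r * _]mulrC.
  apply: ler_wpM2r; first by rewrite mulr_ge0 ?powR_ge0.
  by apply: ge0_ler_powR; rewrite ?subr_ge0 ?inE ?nnegrE ?(ltW V0) ?(ltW U0).
rewrite !powRS // -subr_ge0.
have -> : (U - V) * (V `^ r + U `^ r) - (U * U `^ r - V * V `^ r) =
          U * V `^ r - V * U `^ r by ring.
by rewrite subr_ge0.
Qed.

End PowerFacts.

Section AffinePower.
Context {R : realType}.
Notation mu := (@lebesgue_measure R).

(* A primitive of [(t - c) * ((s + 1) * (a + h * t) `^ s)], obtained by
   integrating by parts against [(a + h * t) `^ (s + 1) / h]. *)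
Definition kernel_primitive (a h s c x : R) : R :=
  h^-1 * ((x - c) * (a + h * x) `^ (s + 1)
          - ((s + 1 + 1) * h)^-1 * (a + h * x) `^ (s + 1 + 1)).

Context {a h : R}.

Lemma is_derive_powR_affine (k : R) {t : R} : 0 < a + h * t ->
  is_derive t 1 (fun x => (a + h * x) `^ k) (k * (a + h * t) `^ (k - 1) * h).
Proof.
move=> ut.
have daff : is_derive t 1 (fun x => a + h * x) h.
  have := is_deriveD (is_derive_cst a t 1) (is_deriveZ h (is_derive_id t 1)).
  by rewrite add0r /GRing.scale /= mulr1.
exact: (@is_derive1_comp R _ (fun x => a + h * x) t _ _ (is_derive1_powR k ut) daff).
Qed.

Lemma continuous_powR_affine (k : R) {t : R} : 0 < a + h * t ->
  {for t, continuous (fun x => (a + h * x) `^ k)}.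
Proof.
move=> /(is_derive_powR_affine k) [dt _].
exact/differentiable_continuous/derivable1_diffP.
Qed.

Lemma is_derive_kernel_primitive (s c : R) {t : R} :
  h != 0 -> s + 1 + 1 != 0 -> 0 < a + h * t ->
  is_derive t 1 (kernel_primitive a h s c) ((t - c) * ((s + 1) * (a + h * t) `^ s)).
Proof.
move=> h_neq0 s2_neq0 ut.
have dsub : is_derive t 1 (fun x => x - c) (1 - 0) by exact: is_deriveB.
have := is_deriveZ h^-1 (is_deriveB
  (is_deriveM dsub (is_derive_powR_affine (s + 1) ut))
  (is_deriveZ ((s + 1 + 1) * h)^-1 (is_derive_powR_affine (s + 1 + 1) ut))).
rewrite /GRing.scale /= !addrK subr0 => dG; apply: (is_derive_eq dG).
by field; rewrite h_neq0 s2_neq0.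
Qed.

Context {x0 x1 : R}.
Hypotheses (h_gt0 : 0 < h) (ax0_gt0 : 0 < a + h * x0) (x01 : x0 <= x1).

Lemma affine_gt0 {t : R} : x0 <= t -> 0 < a + h * t.
Proof. by move=> x0t; apply: (lt_le_trans ax0_gt0); rewrite lerD2l ler_pM2l. Qed.

Lemma Rintegral_powR_affine (r : R) : r + 1 != 0 ->
  \int[mu]_(t in `[x0, x1]) (a + h * t) `^ r =
  ((a + h * x1) `^ (r + 1) - (a + h * x0) `^ (r + 1)) / ((r + 1) * h).
Proof.
move=> r1_neq0.
pose F t := ((r + 1) * h)^-1 * (a + h * t) `^ (r + 1).
have cF t : x0 <= t -> {for t, continuous F}.
  move=> x0t; apply: continuousM; first exact: cvg_cst.
  exact/continuous_powR_affine/affine_gt0.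
transitivity (F x1 - F x0); last by rewrite /F -mulrBr mulrC.
apply: Rintegral_FTC => //; last 2 first.
- exact: cF.
- exact/cF/x01.
- move=> t; rewrite in_itv /= => /andP[/affine_gt0 ut _].
  exact: continuous_powR_affine.
move=> t /andP[/ltW /affine_gt0 ut _].
have := is_deriveZ ((r + 1) * h)^-1 (is_derive_powR_affine (r + 1) ut).
rewrite /GRing.scale /= addrK => dF; apply: (is_derive_eq dF).
by field; rewrite r1_neq0 gt_eqF.
Qed.

Lemma Rintegral_powR_affine_le (r : R) : -1 < r -> r <= 1 ->
  \int[mu]_(t in `[x0, x1]) (a + h * t) `^ r <=
  (x1 - x0) * ((a + h * x0) `^ r + (a + h * x1) `^ r) / (r + 1).
Proof.
move=> r_gtN1 r1; have r1_gt0 : 0 < r + 1 by rewrite -ltrBlDr sub0r.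
rewrite Rintegral_powR_affine ?gt_eqF // [(r + 1) * h]mulrC invfM mulrA.
rewrite ler_pM2r ?invr_gt0 // ler_pdivrMr //.
have -> : (x1 - x0) * ((a + h * x0) `^ r + (a + h * x1) `^ r) * h =
    (a + h * x1 - (a + h * x0)) * ((a + h * x0) `^ r + (a + h * x1) `^ r) by ring.
by apply: powRS_sub_le; rewrite ?affine_gt0 // lerD2l ler_pM2l.
Qed.

Lemma continuous_in_powR_affine (k : R) :
  {in `[x0, x1], continuous (fun t => (a + h * t) `^ k)}.
Proof.
move=> t; rewrite in_itv /= => /andP[/affine_gt0 ut _].
exact: continuous_powR_affine.
Qed.

Lemma Rintegral_kernel (s c : R) : s + 1 + 1 != 0 ->
  \int[mu]_(t in `[x0, x1]) ((t - c) * ((s + 1) * (a + h * t) `^ s)) =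
  kernel_primitive a h s c x1 - kernel_primitive a h s c x0.
Proof.
move=> s2_neq0.
have dG t : x0 <= t -> is_derive t 1 (kernel_primitive a h s c) _ :=
  fun x0t => is_derive_kernel_primitive s c (lt0r_neq0 h_gt0) s2_neq0 (affine_gt0 x0t).
have cG t : x0 <= t -> {for t, continuous (kernel_primitive a h s c)}.
  by move=> /dG [/derivable1_diffP /differentiable_continuous].
apply: Rintegral_FTC => //; last 2 first.
- exact: cG.
- exact/cG/x01.
- move=> t tx.
  apply: (@continuousM _ _ (fun t => t - c) (fun t => (s + 1) * (a + h * t) `^ s)).
    by apply: cvgB; [exact: cvg_id | exact: cvg_cst].
  by apply: continuousM; [exact: cvg_cst | exact: continuous_in_powR_affine].
by move=> t /andP[/ltW /dG].
Qed.

Lemma hoelder_kernel_le (c : R) {s p q : R} :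
  0 < s -> 0 < p -> 1 < q -> p^-1 + q^-1 = 1 -> s * q <= 1 ->
  `| \int[mu]_(t in `[x0, x1]) ((t - c) * ((s + 1) * (a + h * t) `^ s)) | <=
  (\int[mu]_(t in `[x0, x1]) `|t - c| `^ p) `^ p^-1 *
  ((s + 1) `^ p^-1 *
   ((x1 - x0) * ((a + h * x0) `^ (s * q) + (a + h * x1) `^ (s * q))) `^ q^-1).
Proof.
move=> s0 p0 q1 pq sq1; have q0 : 0 < q := lt_trans ltr01 q1.
have s1_gt0 : 0 < s + 1 by rewrite addr_gt0.
set X := (x1 - x0) * _.
have X0 : 0 <= X by rewrite mulr_ge0 ?subr_ge0 ?addr_ge0 ?powR_ge0.
have within_powR k : {within `[x0, x1], continuous (fun t => (a + h * t) `^ k)}.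
  by apply: continuous_in_subspaceT => t; rewrite inE /= => /continuous_in_powR_affine.
have within_g : {within `[x0, x1], continuous (fun t => (s + 1) * (a + h * t) `^ s)}.
  apply: continuous_in_subspaceT => t; rewrite inE /= => tx.
  by apply: cvgM; [exact: cvg_cst | exact: continuous_in_powR_affine].
have within_sub : {within `[x0, x1], continuous (fun t => t - c)}.
  by apply: continuous_subspaceT => t; apply: cvgB; [exact: cvg_id | exact: cvg_cst].
apply: le_trans (hoelder_Rintegral_itv within_sub within_g p0 q0 pq) _.
apply: ler_wpM2l; first exact: powR_ge0.
have norm_g : \int[mu]_(t in `[x0, x1]) `|(s + 1) * (a + h * t) `^ s| `^ q =
    (s + 1) `^ q * \int[mu]_(t in `[x0, x1]) (a + h * t) `^ (s * q).
  rewrite -RintegralZl //; last exact: continuous_itv_integrable.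
  apply: eq_Rintegral => t _.
  by rewrite ger0_norm ?mulr_ge0 ?powR_ge0 ?(ltW s1_gt0) // powRM ?powR_ge0 ?(ltW s1_gt0) // -powRrM.
have pow_q1 : (s + 1) `^ (q - 1) = (s + 1) `^ q / (s + 1).
  by rewrite powRB ?powRr1 ?(ltW s1_gt0) // gt_eqF ?implybT.
have int_g : \int[mu]_(t in `[x0, x1]) `|(s + 1) * (a + h * t) `^ s| `^ q <=
    (s + 1) `^ (q - 1) * X.
  rewrite norm_g pow_q1 -mulrA [_^-1 * X]mulrC.
  apply: ler_wpM2l; first exact: powR_ge0.
  have sq_gtN1 : -1 < s * q by rewrite (lt_trans (ltrN10 R)) ?mulr_gt0.
  apply: le_trans (Rintegral_powR_affine_le _ sq_gtN1 sq1) _.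
  rewrite ler_wpM2l // lef_pV2 ?posrE ?addr_gt0 ?mulr_gt0 // lerD2r.
  by rewrite ler_peMr ?ltW.
apply: le_trans (ge0_ler_powR _ _ _ int_g) _.
- by rewrite invr_ge0 ltW.
- by rewrite nnegrE; apply: Rintegral_ge0 => t _; exact: powR_ge0.
- by rewrite nnegrE mulr_ge0 ?powR_ge0.
rewrite powRM ?powR_ge0 // -powRrM.
have -> : (q - 1) * q^-1 = p^-1 by rewrite mulrBl mulfV ?gt_eqF // mul1r -pq; ring.
by [].
Qed.

End AffinePower.

Section WeightedMeanError.
Context {R : realType}.
Notation mu := (@lebesgue_measure R).

Lemma powR_Lmean (p a b : R) : 0 < p -> 0 <= a -> a < b ->
  Lmean p a b `^ p = (b `^ (p + 1) - a `^ (p + 1)) / ((p + 1) * (b - a)).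
Proof.
move=> p0 a0 ab; have p1_gt0 : 0 < p + 1 by rewrite addr_gt0.
rewrite /Lmean -powRrM mulVf ?gt_eqF // powRr1 // divr_ge0 //.
  rewrite subr_ge0; apply: ge0_ler_powR; rewrite ?nnegrE ?(ltW p1_gt0) ?(ltW ab) //.
  exact: le_trans a0 (ltW ab).
by rewrite mulr_ge0 ?subr_ge0 ?ltW.
Qed.

Lemma weighted_mean_error_eq (a b s alpha lambda : R) :
  0 < a -> a < b -> 0 < s -> 0 <= alpha <= 1 ->
  lambda * Amean alpha (a `^ (s + 1)) (b `^ (s + 1))
    + (1 - lambda) * (Amean alpha a b) `^ (s + 1) - (Lmean (s + 1) a b) `^ (s + 1) =
  (b - a) *
  (\int[mu]_(t in `[0, 1 - alpha])
      ((t - alpha * lambda) * ((s + 1) * (a + (b - a) * t) `^ s)) +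
   \int[mu]_(t in `[1 - alpha, 1])
      ((t - (1 - lambda * (1 - alpha))) * ((s + 1) * (a + (b - a) * t) `^ s))).
Proof.
move=> a0 ab s0 /andP[al0 al1]; have h0 : 0 < b - a by rewrite subr_gt0.
have s2_neq0 : s + 1 + 1 != 0 by rewrite gt_eqF // !addr_gt0.
have ux0 : 0 < a + (b - a) * 0 by rewrite mulr0 addr0.
have ux1 : 0 < a + (b - a) * (1 - alpha) by nra.
have be0 : 0 <= 1 - alpha by rewrite subr_ge0.
have be1 : 1 - alpha <= 1 by rewrite lerBlDr lerDl.
rewrite (Rintegral_kernel h0 ux0 be0 _ _ s2_neq0) (Rintegral_kernel h0 ux1 be1 _ _ s2_neq0).
rewrite /kernel_primitive.
have -> : a + (b - a) * 0 = a by rewrite mulr0 addr0.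
have -> : a + (b - a) * (1 - alpha) = Amean alpha a b by rewrite /Amean; ring.
have -> : a + (b - a) * 1 = b by rewrite mulr1 addrC subrK.
rewrite powR_Lmean ?ltW ?addr_gt0 // /Amean.
by field; rewrite gt_eqF ?s2_neq0.
Qed.

Lemma weighted_mean_error_le (a b p q s alpha lambda E1 E2 : R) :
  0 < a -> a < b -> 1 < p -> 1 < q -> p^-1 + q^-1 = 1 ->
  0 < s -> s < q^-1 -> 0 <= alpha <= 1 ->
  \int[mu]_(t in `[0, 1 - alpha]) `|t - alpha * lambda| `^ p = E1 / (p + 1) ->
  \int[mu]_(t in `[1 - alpha, 1]) `|t - (1 - lambda * (1 - alpha))| `^ p = E2 / (p + 1) ->
  `| lambda * Amean alpha (a `^ (s + 1)) (b `^ (s + 1))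
     + (1 - lambda) * (Amean alpha a b) `^ (s + 1) - (Lmean (s + 1) a b) `^ (s + 1) | <=
  (b - a) * ((p + 1)^-1) `^ (p^-1) * (s + 1) `^ (1 - q^-1) *
  (E1 `^ (p^-1) * (Cs a b s alpha q) `^ (q^-1)
   + E2 `^ (p^-1) * (Ds a b s alpha q) `^ (q^-1)).
Proof.
move=> a0 ab p1 q1 pq s0 sq /[dup] al /andP[al0 al1] E1_def E2_def.
have h0 : 0 < b - a by rewrite subr_gt0.
have p0 : 0 < p := lt_trans ltr01 p1.
have p1_gt0 : 0 < p + 1 by rewrite addr_gt0.
have q0 : 0 < q := lt_trans ltr01 q1.
have sq1 : s * q <= 1 by rewrite -(mulVf (lt0r_neq0 q0)) ler_pM2r // ltW.
have be0 : 0 <= 1 - alpha by rewrite subr_ge0.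
have be1 : 1 - alpha <= 1 by rewrite lerBlDr lerDl.
have ux0 : 0 < a + (b - a) * 0 by rewrite mulr0 addr0.
have ux1 : 0 < a + (b - a) * (1 - alpha) by nra.
have P1 := hoelder_kernel_le h0 ux0 be0 (alpha * lambda) s0 p0 q1 pq sq1.
have P2 := hoelder_kernel_le h0 ux1 be1 (1 - lambda * (1 - alpha)) s0 p0 q1 pq sq1.
have ea : a + (b - a) * 0 = a by rewrite mulr0 addr0.
have eA : a + (b - a) * (1 - alpha) = Amean alpha a b by rewrite /Amean; ring.
have eb : a + (b - a) * 1 = b by rewrite mulr1 addrC subrK.
have e_alpha : 1 - (1 - alpha) = alpha by ring.
rewrite E1_def ea eA subr0 in P1; rewrite E2_def eA eb e_alpha in P2.
have E_ge0 E x0 x1 c : \int[mu]_(t in `[x0, x1]) `|t - c| `^ p = E / (p + 1) -> 0 <= E.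
  move=> E_def; have : 0 <= E / (p + 1).
    by rewrite -E_def; apply: Rintegral_ge0 => t _; exact: powR_ge0.
  by rewrite pmulr_lge0 // invr_gt0.
rewrite weighted_mean_error_eq // normrM (ger0_norm (ltW h0)).
apply: le_trans (ler_wpM2l (ltW h0) (ler_normD _ _)) _.
apply: le_trans (ler_wpM2l (ltW h0) (lerD P1 P2)) _.
rewrite !powRM ?(E_ge0 _ _ _ _ E1_def) ?(E_ge0 _ _ _ _ E2_def) ?invr_ge0 ?(ltW p1_gt0)
  ?be0 ?addr_ge0 ?powR_ge0 //.
have -> : 1 - q^-1 = p^-1 by rewrite -pq; ring.
rewrite /Cs /Ds [_ `^ (s * q) + a `^ (s * q)]addrC.
by rewrite le_eqVlt; apply/orP; left; apply/eqP; ring.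
Qed.

End WeightedMeanError.

Theorem mainTheorem8 (R : realType) (a b p q s alpha lambda : R) :
  0 < a -> a < b -> 1 < p -> 1 < q -> p^-1 + q^-1 = 1 ->
  0 < s -> s < q^-1 ->
  0 <= alpha <= 1 -> 0 <= lambda <= 1 ->
  let lhs := `| lambda * Amean alpha (a `^ (s + 1)) (b `^ (s + 1))
               + (1 - lambda) * (Amean alpha a b) `^ (s + 1)
               - (Lmean (s + 1) a b) `^ (s + 1) | in
  let c := (b - a) * ((p + 1)^-1) `^ (p^-1) * (s + 1) `^ (1 - q^-1) in
  let C := (Cs a b s alpha q) `^ (q^-1) in
  let D := (Ds a b s alpha q) `^ (q^-1) in
  [/\ (alpha * lambda <= 1 - alpha -> 1 - alpha <= 1 - lambda * (1 - alpha) ->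
        lhs <= c * ((eps1 alpha lambda p) `^ (p^-1) * C
                    + (eps1 (1 - alpha) lambda p) `^ (p^-1) * D)),
      (alpha * lambda <= 1 - lambda * (1 - alpha) -> 1 - lambda * (1 - alpha) <= 1 - alpha ->
        lhs <= c * ((eps1 alpha lambda p) `^ (p^-1) * C
                    + (eps2 (1 - alpha) lambda p) `^ (p^-1) * D)) &
      (1 - alpha <= alpha * lambda -> alpha * lambda <= 1 - lambda * (1 - alpha) ->
        lhs <= c * ((eps2 alpha lambda p) `^ (p^-1) * C
                    + (eps1 (1 - alpha) lambda p) `^ (p^-1) * D))].
Proof.
move=> a0 ab p1 q1 pq s0 sq /[dup] al /andP[al0 al1] /andP[la0 la1] lhs c C D.
have p0 : 0 < p := lt_trans ltr01 p1.
have mu_ge0 : 0 <= alpha * lambda by rewrite mulr_ge0.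
have be0 : 0 <= 1 - alpha by rewrite subr_ge0.
have be1 : 1 - alpha <= 1 by rewrite lerBlDr lerDl.
have nu_le1 : 1 - lambda * (1 - alpha) <= 1 by rewrite lerBlDr lerDl mulr_ge0 ?subr_ge0.
have e1 : 1 - lambda * (1 - alpha) - (1 - alpha) = 1 - (1 - alpha) - (1 - alpha) * lambda by ring.
have e2 : 1 - (1 - lambda * (1 - alpha)) = (1 - alpha) * lambda by ring.
have e3 : 1 - alpha - (1 - lambda * (1 - alpha)) = (1 - alpha) * lambda - 1 + (1 - alpha) by ring.
have e4 : alpha * lambda - (1 - alpha) = alpha * lambda - 1 + alpha by ring.
split => H1 H2; apply: weighted_mean_error_le => //.
- by rewrite Rintegral_powR_dist_mid // subr0.
- by rewrite Rintegral_powR_dist_mid // e1 e2 /eps1 addrC.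
- by rewrite Rintegral_powR_dist_mid ?(le_trans H1 H2) // subr0.
- by rewrite Rintegral_powR_dist_ge // e2 e3.
- by rewrite Rintegral_powR_dist_le // subr0 e4.
- by rewrite Rintegral_powR_dist_mid ?(le_trans H1 H2) // e1 e2 /eps1 addrC.
Qed.
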